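(* Let $F$ be a lens. Then the following are equivalent: (1) $F$ is an epimorphism in $\mathbf{Lens}$; (2) the get functor $UF$ is surjective on objects; (3) the get functor $UF$ is surjective on morphisms.
   Context: A lens $F\colon \mathbf{A}\to\mathbf{B}$ between small categories consists of a functor $F\colon\mathbf{A}\to\mathbf{B}$ (the get functor) together with, for each object $A$ of $\mathbf{A}$, a function $\varphi_{F,A}$ from the set of morphisms of $\mathbf{B}$ with domain $FA$ to the set of morphisms of $\mathbf{A}$ with domain $A$, such that: $F(\varphi_{F,A}b)=b$; $\varphi_{F,A}(\mathrm{id}_{FA})=\mathrm{id}_A$; and $\varphi_{F,A}(b'\circ b)=\varphi_{F,A'}(b')\circ\varphi_{F,A}(b)$ whenever $b$ has domain $FA$, $A'$ is the codomain of $\varphi_{F,A}b$, and $b'$ has domain $FA'$. $\mathbf{Lens}$ is the category of small categories and lenses, with composite of $F\colon\mathbf{A}\to\mathbf{B}$, $G\colon\mathbf{B}\to\mathbf{C}$ having get functor $G\circ F$ and puts $\varphi_{G\circ F,A}(c)=\varphi_{F,A}(\varphi_{G,FA}(c))$. $U\colon\mathbf{Lens}\to\mathbf{Cat}$ sends a lens to its get functor. *)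

Set Implicit Arguments.
Unset Strict Implicit.

Record Cat := {
  ob : Type;
  mor : Type;
  dom : mor -> ob;
  cod : mor -> ob;
  idm : ob -> mor;
  comp : mor -> mor -> mor;  (* comp g f = g o f, meaningful when cod f = dom g *)
  dom_idm : forall x, dom (idm x) = x;
  cod_idm : forall x, cod (idm x) = x;
  dom_comp : forall g f, cod f = dom g -> dom (comp g f) = dom f;
  cod_comp : forall g f, cod f = dom g -> cod (comp g f) = cod g;
  comp_idl : forall f, comp (idm (cod f)) f = f;
  comp_idr : forall f, comp f (idm (dom f)) = f;
  comp_assoc : forall h g f, cod f = dom g -> cod g = dom h ->
    comp h (comp g f) = comp (comp h g) f
}.

Record Functor (A B : Cat) := {
  fob : ob A -> ob B;
  fmor : mor A -> mor B;
  fdom : forall f, dom (fmor f) = fob (dom f);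
  fcod : forall f, cod (fmor f) = fob (cod f);
  fid : forall x, fmor (idm x) = idm (fob x);
  fcomp : forall g f, cod f = dom g -> fmor (comp g f) = comp (fmor g) (fmor f)
}.

(* A lens: a get functor together with put functions phi A : {b | dom b = F A}
   -> {a | dom a = A}.  phi is given as a total function; its values outside
   the domain dom b = F A are irrelevant (see lens_eq). *)
Record Lens (A B : Cat) := {
  get : Functor A B;
  put : ob A -> mor B -> mor A;
  put_dom : forall a b, dom b = fob get a -> dom (put a b) = a;
  put_get : forall a b, dom b = fob get a -> fmor get (put a b) = b;
  put_id : forall a, put a (idm (fob get a)) = idm a;
  put_comp : forall a b b', dom b = fob get a ->
    dom b' = fob get (cod (put a b)) ->
    put a (comp b' b) = comp (put (cod (put a b)) b') (put a b)
}.

Section Composition.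
Variables (A B C : Cat) (F : Functor A B) (G : Functor B C).

Definition functor_comp : Functor A C.
Proof.
  refine {| fob := fun x => fob G (fob F x); fmor := fun f => fmor G (fmor F f) |}.
  - intro f; now rewrite fdom, fdom.
  - intro f; now rewrite fcod, fcod.
  - intro x; now rewrite fid, fid.
  - intros g f H. rewrite fcomp by exact H. apply fcomp.
    now rewrite fcod, fdom, H.
Defined.
End Composition.

Section LensComposition.
Variables (A B C : Cat) (F : Lens A B) (G : Lens B C).

Lemma lc_put_dom : forall a c, dom c = fob (functor_comp (get F) (get G)) a ->
  dom (put F a (put G (fob (get F) a) c)) = a.
Proof. intros a c H. apply put_dom. apply put_dom. exact H. Qed.

Lemma lc_put_get : forall a c, dom c = fob (functor_comp (get F) (get G)) a ->
  fmor (functor_comp (get F) (get G)) (put F a (put G (fob (get F) a) c)) = c.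
Proof.
  intros a c H. simpl. rewrite put_get. apply put_get. exact H.
  apply put_dom. exact H.
Qed.

Lemma lc_put_id : forall a,
  put F a (put G (fob (get F) a) (idm (fob (functor_comp (get F) (get G)) a)))
  = idm a.
Proof. intro a. simpl. rewrite put_id. apply put_id. Qed.

Lemma lc_put_comp : forall a c c',
  dom c = fob (functor_comp (get F) (get G)) a ->
  dom c' = fob (functor_comp (get F) (get G))
             (cod (put F a (put G (fob (get F) a) c))) ->
  put F a (put G (fob (get F) a) (comp c' c)) =
  comp (put F (cod (put F a (put G (fob (get F) a) c)))
          (put G (fob (get F) (cod (put F a (put G (fob (get F) a) c)))) c'))
       (put F a (put G (fob (get F) a) c)).
Proof.
  intros a c c' Hc Hc'. simpl in *.
  set (b := put G (fob (get F) a) c) in *.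
  assert (Hb : dom b = fob (get F) a) by (apply put_dom; exact Hc).
  set (a' := cod (put F a b)) in *.
  assert (Ha' : fob (get F) a' = cod b).
  { unfold a'. rewrite <- fcod. rewrite put_get by exact Hb. reflexivity. }
  rewrite Ha' in Hc'.
  rewrite (@put_comp _ _ G); [| exact Hc | exact Hc'].
  rewrite Ha'.
  apply (@put_comp _ _ F). exact Hb.
  rewrite put_dom; [symmetry; exact Ha' | exact Hc'].
Qed.

Definition lens_comp : Lens A C :=
  {| get := functor_comp (get F) (get G);
     put := fun a c => put F a (put G (fob (get F) a) c);
     put_dom := lc_put_dom; put_get := lc_put_get;
     put_id := lc_put_id; put_comp := lc_put_comp |}.
End LensComposition.

Definition lens_eq (A B : Cat) (F G : Lens A B) : Prop :=
  (forall x, fob (get F) x = fob (get G) x) /\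
  (forall f, fmor (get F) f = fmor (get G) f) /\
  (forall a b, dom b = fob (get F) a -> put F a b = put G a b).

Definition lens_epi (A B : Cat) (F : Lens A B) : Prop :=
  forall (C : Cat) (G H : Lens B C),
    lens_eq (lens_comp F G) (lens_comp F H) -> lens_eq G H.

Definition surj_ob (A B : Cat) (F : Functor A B) : Prop :=
  forall y : ob B, exists x : ob A, fob F x = y.

Definition surj_mor (A B : Cat) (F : Functor A B) : Prop :=
  forall g : mor B, exists f : mor A, fmor F f = g.

(* Every morphism out of an object F a lifts along the put, so the image of the
   get functor is closed under codomains.  For any set of objects closed under
   codomains, B acts on bool by resetting the flag to true along each morphism
   entering the set and leaving it unchanged otherwise.  The constant flag true
   and the indicator of the set are both equivariant, so they give two section
   lenses into the category of elements of this action; when the set contains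
   the image of F they agree after F, and when it misses an object they differ,
   so an epi F is surjective on objects.  Conversely, if F is surjective on
   objects, every morphism of B is the get of a put, which lets F be cancelled
   and also gives surjectivity on morphisms. *)
From Stdlib Require Import ClassicalEpsilon Bool.
Set Implicit Arguments.
Unset Strict Implicit.

Section ActionCategory.
Variables (B : Cat) (T : Type) (act : mor B -> T -> T).
Hypothesis act_idm : forall x t, act (idm x) t = t.
Hypothesis act_comp : forall g f t, cod f = dom g -> act (comp g f) t = act g (act f t).

Definition action_cat : Cat.
Proof.
  refine {| ob := ob B * T; mor := mor B * T;
    dom := fun f => (dom (fst f), snd f);
    cod := fun f => (cod (fst f), act (fst f) (snd f));
    idm := fun x => (idm (fst x), snd x);
    comp := fun g f => (comp (fst g) (fst f), snd f) |}.
  - intros [x t]; simpl. now rewrite dom_idm.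
  - intros [x t]; simpl. now rewrite cod_idm, act_idm.
  - intros [g s] [f t] H; injection H as Hfg _; simpl. now rewrite dom_comp.
  - intros [g s] [f t] H; injection H as Hfg Hs; simpl.
    now rewrite cod_comp, act_comp, Hs.
  - intros [f t]; simpl. now rewrite comp_idl.
  - intros [f t]; simpl. now rewrite comp_idr.
  - intros [h r] [g s] [f t] Hfg Hgh; injection Hfg as Hfg _; injection Hgh as Hgh _.
    simpl. now rewrite comp_assoc.
Defined.

Variable s : ob B -> T.
Hypothesis s_equivariant : forall f, act f (s (dom f)) = s (cod f).

Definition section_functor : Functor B action_cat.
Proof.
  refine {| fob := fun x => (x, s x) : ob action_cat;
            fmor := fun f => (f, s (dom f)) : mor action_cat |}.
  - reflexivity.
  - intro f; simpl. now rewrite s_equivariant.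
  - intro x; simpl. now rewrite dom_idm.
  - intros g f Hfg; simpl. now rewrite dom_comp.
Defined.

Definition section_lens : Lens B action_cat.
Proof.
  refine {| get := section_functor; put := fun _ c => fst c |}.
  - intros x [f t] H; injection H as Hf _; exact Hf.
  - intros x [f t] H; injection H as Hf Ht; simpl. now rewrite Hf, Ht.
  - reflexivity.
  - reflexivity.
Defined.

End ActionCategory.

Arguments section_lens {B T act} act_idm act_comp s s_equivariant.

Section SectionLenses.
Variables (B : Cat) (T : Type) (act : mor B -> T -> T).
Hypothesis act_idm : forall x t, act (idm x) t = t.
Hypothesis act_comp : forall g f t, cod f = dom g -> act (comp g f) t = act g (act f t).
Variables (s1 s2 : ob B -> T).
Hypothesis s1_equivariant : forall f, act f (s1 (dom f)) = s1 (cod f).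
Hypothesis s2_equivariant : forall f, act f (s2 (dom f)) = s2 (cod f).

Let L1 := section_lens act_idm act_comp s1 s1_equivariant.
Let L2 := section_lens act_idm act_comp s2 s2_equivariant.

Lemma section_lens_eq_ob : lens_eq L1 L2 -> forall x, s1 x = s2 x.
Proof.
  intros [Hob _] x. specialize (Hob x); simpl in Hob.
  now injection Hob.
Qed.

Lemma lens_eq_comp_section_lens (A : Cat) (F : Lens A B) :
  (forall a, s1 (fob (get F) a) = s2 (fob (get F) a)) ->
  lens_eq (lens_comp F L1) (lens_comp F L2).
Proof.
  intro Hs. split; [| split].
  - intro a; simpl. now rewrite Hs.
  - intro f; simpl. now rewrite fdom, Hs.
  - reflexivity.
Qed.

End SectionLenses.

Section EntryAction.
Variables (B : Cat) (up : ob B -> bool).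
Hypothesis up_cod : forall f, up (dom f) = true -> up (cod f) = true.

Definition entry_act (f : mor B) (t : bool) : bool :=
  implb (eqb (up (dom f)) (up (cod f))) t.

Lemma entry_act_idm x t : entry_act (idm x) t = t.
Proof. unfold entry_act. now rewrite dom_idm, cod_idm, eqb_reflx. Qed.

Lemma entry_act_comp g f t :
  cod f = dom g -> entry_act (comp g f) t = entry_act g (entry_act f t).
Proof.
  intro Hfg. unfold entry_act. rewrite dom_comp, cod_comp by exact Hfg.
  pose proof (@up_cod f) as Hf. pose proof (@up_cod g) as Hg. rewrite <- Hfg in Hg |- *.
  destruct (up (dom f)), (up (cod f)), (up (cod g)), t; simpl in *; auto.
Qed.

Lemma true_entry_equivariant f : entry_act f true = true.
Proof. apply implb_true_r. Qed.

Lemma up_entry_equivariant f : entry_act f (up (dom f)) = up (cod f).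
Proof.
  unfold entry_act. pose proof (@up_cod f) as Hf.
  destruct (up (dom f)), (up (cod f)); simpl; auto using eq_sym.
Qed.

End EntryAction.

Lemma lens_epi_upward_closed (A B : Cat) (F : Lens A B) (up : ob B -> bool)
  (up_cod : forall f, up (dom f) = true -> up (cod f) = true) :
  lens_epi F -> (forall a, up (fob (get F) a) = true) -> forall y, up y = true.
Proof.
  intros Hepi Hup y. symmetry.
  assert (Hafter : forall a, true = up (fob (get F) a)) by (intro a; now rewrite Hup).
  pose proof (lens_eq_comp_section_lens (entry_act_idm up) (entry_act_comp up_cod)
                (true_entry_equivariant up) (up_entry_equivariant up_cod)
                (s1 := fun _ => true) (s2 := up) (F := F) Hafter)
    as Hequal_after_F.
  exact (section_lens_eq_ob (Hepi _ _ _ Hequal_after_F) y).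
Qed.

Definition in_image (A B : Cat) (F : Functor A B) (y : ob B) : bool :=
  if excluded_middle_informative (exists x, fob F x = y) then true else false.

Lemma in_imageP (A B : Cat) (F : Functor A B) y :
  in_image F y = true <-> exists x, fob F x = y.
Proof.
  unfold in_image. destruct (excluded_middle_informative _); intuition discriminate.
Qed.

Lemma in_image_cod (A B : Cat) (F : Lens A B) f :
  in_image (get F) (dom f) = true -> in_image (get F) (cod f) = true.
Proof.
  rewrite !in_imageP. intros [a Ha]. exists (cod (put F a f)).
  now rewrite <- fcod, put_get.
Qed.

Lemma lens_epi_surj_ob (A B : Cat) (F : Lens A B) : lens_epi F -> surj_ob (get F).
Proof.
  intros Hepi y. apply in_imageP.
  apply (lens_epi_upward_closed (@in_image_cod _ _ F) Hepi).
  intro a. apply in_imageP. now exists a.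
Qed.

Lemma surj_ob_lens_epi (A B : Cat) (F : Lens A B) : surj_ob (get F) -> lens_epi F.
Proof.
  intros Hs C G H [Hob [Hmor Hput]]; simpl in *. split; [| split].
  - intro y. destruct (Hs y) as [x <-]. apply Hob.
  - intro g. destruct (Hs (dom g)) as [x Hx].
    rewrite <- (@put_get _ _ F x g) by now rewrite Hx. apply Hmor.
  - intros b g Hg. destruct (Hs b) as [x <-].
    rewrite <- (@put_get _ _ F x (put G (fob (get F) x) g)) by now apply put_dom.
    rewrite <- (@put_get _ _ F x (put H (fob (get F) x) g))
      by (apply put_dom; now rewrite Hg, Hob).
    now rewrite Hput.
Qed.

Lemma lens_surj_ob_surj_mor (A B : Cat) (F : Lens A B) :
  surj_ob (get F) -> surj_mor (get F).
Proof.
  intros Hs g. destruct (Hs (dom g)) as [x Hx].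
  exists (put F x g). now apply put_get.
Qed.

Lemma surj_mor_surj_ob (A B : Cat) (F : Functor A B) : surj_mor F -> surj_ob F.
Proof.
  intros Hm y. destruct (Hm (idm y)) as [f Hf].
  exists (dom f). now rewrite <- fdom, Hf, dom_idm.
Qed.

Theorem corollary3p11 (A B : Cat) (F : Lens A B) :
  (lens_epi F <-> surj_ob (get F)) /\ (surj_ob (get F) <-> surj_mor (get F)).
Proof.
  split; split.
  - apply lens_epi_surj_ob.
  - apply surj_ob_lens_epi.
  - apply lens_surj_ob_surj_mor.
  - apply surj_mor_surj_ob.
Qed.
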